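(* Let $P=\operatorname{conv}(v_0,\ldots,v_d)\subseteq M_{\mathbb{R}}$ be a lattice $d$-simplex that is not unimodularly equivalent to the standard simplex $\Delta_d=\operatorname{conv}(0,e_1,\ldots,e_d)$. Then $\deg(P)\ge\nu_P$.
   Context: $M\cong\mathbb{Z}^d$ is a lattice. Two lattice polytopes are unimodularly equivalent if one is mapped to the other by an affine lattice automorphism of $M$. For a lattice $d$-polytope $P$, the Ehrhart series is $\sum_{k\ge0}|kP\cap M|t^k=h^*_P(t)/(1-t)^{d+1}$ with $h^*_P$ a polynomial of degree at most $d$; $\deg(P)$ is defined as the degree of $h^*_P$ (equivalently, $\deg(P)=d$ if $P$ has an interior lattice point, and otherwise $\deg(P)$ is the smallest $i\ge 0$ such that $kP$ has no interior lattice points for all $1\le k\le d-i$). With $\mathcal{V}$ the vertex set of $P$, $\nu_P$ is the smallest positive integer such that $(k+1)P\cap M=\mathcal{V}+(kP\cap M)$ for all $k\ge\nu_P$. *)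

From HB Require Import structures.
From mathcomp Require Import all_boot all_order all_algebra.
From Stdlib Require Import ClassicalEpsilon.
Set Implicit Arguments. Unset Strict Implicit. Unset Printing Implicit Defensive.
Import Order.TTheory GRing.Theory Num.Theory.
Local Open Scope ring_scope.

Definition decide (P : Prop) : bool :=
  if excluded_middle_informative P then true else false.

(* The lattice M = Z^d (row vectors); M_R is replaced by Q^d. *)
Definition intvec (d : nat) (x : 'rV[int]_d) : 'rV[rat]_d := map_mx intr x.

Definition in_kconv (d n : nat) (w : 'I_n -> 'rV[rat]_d) (k : rat) (x : 'rV[rat]_d)
  : Prop :=
  exists lam : 'I_n -> rat,
    (forall i, 0 <= lam i) /\ \sum_(i < n) lam i = k /\ x = \sum_(i < n) lam i *: w i.

Definition simplexP (d : nat) (v : 'I_d.+1 -> 'rV[int]_d) : 'rV[rat]_d -> Prop :=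
  in_kconv (fun i => intvec (v i)) 1.

Definition full_dim_simplex (d : nat) (v : 'I_d.+1 -> 'rV[int]_d) : Prop :=
  \det (\matrix_(i < d, j < d) (v (lift ord0 i) 0 j - v ord0 0 j)) != 0.

Definition std_vert (d : nat) (i : 'I_d.+1) : 'rV[rat]_d :=
  \row_(j < d) (if (i : nat) == j.+1 then 1 else 0).

Definition std_simplex (d : nat) : 'rV[rat]_d -> Prop := in_kconv (@std_vert d) 1.

Definition aff_map (d : nat) (U : 'M[int]_d) (t : 'rV[int]_d) (x : 'rV[rat]_d)
  : 'rV[rat]_d := x *m map_mx intr U + intvec t.

Definition unimod_equiv (d : nat) (P Q : 'rV[rat]_d -> Prop) : Prop :=
  exists (U : 'M[int]_d) (t : 'rV[int]_d), U \in unitmx /\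
    forall y, Q y <-> exists x, P x /\ y = aff_map U t x.

Definition in_kP (d : nat) (v : 'I_d.+1 -> 'rV[int]_d) (k : nat) (y : 'rV[int]_d)
  : Prop := in_kconv (fun i => intvec (v i)) k%:R (intvec y).

Definition vbound (d : nat) (v : 'I_d.+1 -> 'rV[int]_d) : nat :=
  (\max_(i < d.+1) \max_(j < d) absz (v i ord0 j))%N.

(* Box [-B,B]^d, B = k * vbound, contains kP; it is enumerated by a finType. *)
Definition box_emb (d B : nat) (x : 'rV['I_(B.*2).+1]_d) : 'rV[int]_d :=
  \row_(j < d) ((x 0 j : nat)%:Z - B%:Z).

Definition ehrhart (d : nat) (v : 'I_d.+1 -> 'rV[int]_d) (k : nat) : nat :=
  #|[pred x : 'rV['I_((k * vbound v).*2).+1]_d | decide (in_kP v k (box_emb x))]|.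

(* Coefficients of h*_P(t) = (1-t)^(d+1) * sum_k |kP ∩ M| t^k. *)
Definition hstar_coef (d : nat) (v : 'I_d.+1 -> 'rV[int]_d) (j : nat) : int :=
  \sum_(i < j.+1) (-1) ^+ i * ('C(d.+1, i))%:Z * (ehrhart v (j - i))%:Z.

(* h*_P as a polynomial (it has degree <= d by Ehrhart's theorem). *)
Definition hstar (d : nat) (v : 'I_d.+1 -> 'rV[int]_d) : {poly int} :=
  \poly_(j < d.+1) hstar_coef v j.

Definition ehrhart_deg (d : nat) (v : 'I_d.+1 -> 'rV[int]_d) : nat :=
  (size (hstar v)).-1.

Definition gen_from (d : nat) (v : 'I_d.+1 -> 'rV[int]_d) (n : nat) : Prop :=
  forall k : nat, (n <= k)%N -> forall y : 'rV[int]_d,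
    in_kP v k.+1 y <-> exists (i : 'I_d.+1) (x : 'rV[int]_d), in_kP v k x /\ y = v i + x.

Definition is_nu (d : nat) (v : 'I_d.+1 -> 'rV[int]_d) (n : nat) : Prop :=
  (0 < n)%N /\ gen_from v n /\ forall m : nat, (0 < m)%N -> gen_from v m -> (n <= m)%N.

From HB Require Import structures.
From mathcomp Require Import all_boot all_order all_algebra zify ring.
From Stdlib Require Import ClassicalEpsilon.
Set Implicit Arguments. Unset Strict Implicit. Unset Printing Implicit Defensive.
Import Order.TTheory GRing.Theory Num.Theory.
Local Open Scope ring_scope.

(* Write the lattice points of kP in barycentric coordinates with respect to
   the vertices, scaled to sum k.  Call a lattice point of kP a box point of
   height k if all its coordinates are < 1.  Inclusion-exclusion over the set
   of coordinates that are >= 1 shows that the coefficient of t^k in h*_P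
   counts the box points of height k, so deg(P) >= H, the largest height of a
   box point.  A lattice point of (k+1)P with k >= H is not a box point, so
   one of its coordinates is >= 1 and subtracting that vertex lands in kP;
   hence nu_P <= H as soon as H > 0.  If H = 0, every barycentric coordinate
   of a lattice point of height 0 is an integer: the inverse of the edge
   matrix is integral, and it maps P onto the standard simplex. *)

Lemma decideP (P : Prop) : decide P = true <-> P.
Proof. by rewrite /decide; case: excluded_middle_informative. Qed.

Lemma sum_subset_sign (I : finType) (X : {set I}) :
  \sum_(S : {set I} | S \subset X) (-1) ^+ #|S| = (X == set0)%:R :> int.
Proof.
have [->|[x xX]] := set_0Vmem X.
  by rewrite eqxx (big_pred1 set0) ?cards0 // => S; rewrite subset0.
have /negbTE -> : X != set0 by apply/set0Pn; exists x.
(* toggling x is a sign-reversing involution on the subsets of X *)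
pose h (S : {set I}) := if x \in S then S :\ x else x |: S.
have hK : involutive h.
  move=> S; rewrite /h; case: (boolP (x \in S)) => xS.
    by rewrite setD11 setD1K.
  by rewrite setU11 setU1K.
have h_sub S : (h S \subset X) = (S \subset X).
  rewrite /h; case: ifP => xS; last by rewrite subUset sub1set xX.
  by rewrite subDset (setUidPr _) // sub1set.
have h_sign S : (-1) ^+ #|h S| = - (-1) ^+ #|S| :> int.
  rewrite /h; case: ifP => xS; last by rewrite cardsU1 xS exprS mulN1r.
  by rewrite (cardsD1 x S) xS exprS mulN1r opprK.
set s := \sum_(S | _) _; have : s = - s.
  rewrite {1}/s (reindex_inj (inv_inj hK)) /= -sumrN.
  by apply: eq_big => S; rewrite ?h_sub ?h_sign.
by move/eqP; rewrite -subr_eq0 opprK -mulr2n mulrn_eq0 => /eqP.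
Qed.

Lemma sum_binomial_subsets n k (g : nat -> int) :
  \sum_(i < k.+1) (-1) ^+ i * ('C(n, i))%:Z * g i
  = \sum_(S : {set 'I_n} | (#|S| <= k)%N) (-1) ^+ #|S| * g #|S|.
Proof.
rewrite (partition_big (fun S : {set 'I_n} => inord #|S| : 'I_k.+1) xpredT
          (P := fun S : {set 'I_n} => (#|S| <= k)%N)) //=.
apply: eq_bigr => i _.
rewrite (eq_big (fun S : {set 'I_n} => #|S| == i) (fun=> (-1) ^+ i * g i)); last first.
- by move=> S /andP [Sk /eqP <-]; rewrite inordK.
- move=> S; case: leqP => Sk /=; first by rewrite -(inj_eq val_inj) /= inordK.
  by apply/esym/negbTE/eqP => e; move: (ltn_ord i); rewrite -e ltnS leqNgt Sk.
rewrite sumr_const.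
have -> : #|(fun S : {set 'I_n} => #|S| == i)| = 'C(n, i).
  by rewrite -[in RHS](card_ord n) -card_draws; apply: eq_card => S; rewrite inE.
by rewrite -mulr_natr natz; ring.
Qed.

Lemma is_nu_le (d : nat) (v : 'I_d.+1 -> 'rV[int]_d) (n : nat) :
  (0 < n)%N -> gen_from v n -> exists m, is_nu v m /\ (m <= n)%N.
Proof.
move=> n_gt0 gen_n.
have exm : exists m, (0 < m)%N && decide (gen_from v m).
  by exists n; rewrite n_gt0; apply/decideP.
have [m /andP [m_gt0 /decideP gen_m] m_min] := ex_minnP exm.
exists m; split; last by apply: m_min; rewrite n_gt0; apply/decideP.
by split; [|split] => // m' m'_gt0 gen_m'; apply: m_min; rewrite m'_gt0; apply/decideP.
Qed.

Section LatticePoints.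

Variables (d : nat) (v : 'I_d.+1 -> 'rV[int]_d).

Lemma box_emb_inj B : injective (@box_emb d B).
Proof.
move=> x x' /rowP e; apply/rowP => j; have := e j.
by rewrite /box_emb !mxE => /addIr [] /val_inj.
Qed.

Lemma box_emb_surj B (y : 'rV[int]_d) :
  (forall j, absz (y 0%R j) <= B)%N -> exists x, y = @box_emb d B x.
Proof.
move=> yB; exists (\row_j inord (absz (y 0 j + B%:Z))).
apply/rowP => j; rewrite /box_emb !mxE inordK; have := yB j; lia.
Qed.

Lemma in_kP_bound k y : in_kP v k y -> forall j, (absz (y 0%R j) <= k * vbound v)%N.
Proof.
case=> lam [lam_ge0 [lam_sum /rowP y_lam]] j; have := y_lam j.
rewrite !mxE summxE => yj.
rewrite -(ler_nat rat) natr_absz intr_norm yj natrM.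
apply: le_trans (ler_norm_sum _ _ _) _.
rewrite -lam_sum mulr_suml; apply: ler_sum => i _.
rewrite !mxE normrM (ger0_norm (lam_ge0 i)) ler_wpM2l // -intr_norm -natr_absz ler_nat.
by apply: (bigop.bigmax_sup i) => //; apply: (bigop.bigmax_sup j).
Qed.

Definition lattice_pts k : seq 'rV[int]_d :=
  [seq box_emb x | x <- enum [pred x : 'rV['I_((k * vbound v).*2).+1]_d |
                                decide (in_kP v k (box_emb x))]].

Lemma size_lattice_pts k : size (lattice_pts k) = ehrhart v k.
Proof. by rewrite size_map -cardE. Qed.

Lemma uniq_lattice_pts k : uniq (lattice_pts k).
Proof. by rewrite map_inj_uniq ?enum_uniq //; apply: box_emb_inj. Qed.

Lemma mem_lattice_pts k y : y \in lattice_pts k <-> in_kP v k y.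
Proof.
split; first by case/mapP => x; rewrite mem_enum inE => /decideP ? ->.
move=> ykP; have [x ex] := box_emb_surj (in_kP_bound ykP).
by rewrite ex map_f // mem_enum inE; apply/decideP; rewrite -ex.
Qed.

End LatticePoints.

Section BarycentricCoordinates.

Variables (d : nat) (v : 'I_d.+1 -> 'rV[int]_d).

Definition vert i : 'rV[rat]_d := intvec (v i).

Definition edge_mx : 'M[rat]_d :=
  \matrix_(i < d, j < d) (vert (lift ord0 i) 0 j - vert ord0 0 j).

Lemma edge_mxE :
  edge_mx = map_mx intr (\matrix_(i < d, j < d) (v (lift ord0 i) 0 j - v ord0 0 j)).
Proof. by apply/matrixP => i j; rewrite !mxE rmorphB. Qed.

Lemma edge_mx_unit : full_dim_simplex v -> edge_mx \in unitmx.
Proof. by move=> hdet; rewrite edge_mxE unitmxE det_map_mx unitfE intr_eq0. Qed.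

Definition edge_coord (y : 'rV[rat]_d) (k : rat) : 'rV[rat]_d :=
  (y - k *: vert ord0) *m invmx edge_mx.

Definition bary (y : 'rV[rat]_d) (k : rat) (i : 'I_d.+1) : rat :=
  if unlift ord0 i is Some j then edge_coord y k 0 j
  else k - \sum_j edge_coord y k 0 j.

Lemma sum_scale_vert (lam : 'I_d.+1 -> rat) :
  \sum_i lam i *: vert i =
  (\sum_i lam i) *: vert ord0 + (\row_j lam (lift ord0 j)) *m edge_mx.
Proof.
rewrite mulmx_sum_row !big_ord_recl /= scalerDl -addrA.
have edge_row j : row j edge_mx = vert (lift ord0 j) - vert ord0.
  by apply/rowP => l; rewrite !mxE.
under [\sum_(j < d) _ *: row j edge_mx]eq_bigr => j _ do rewrite mxE edge_row scalerBr.
by rewrite sumrB -scaler_suml [_ + (_ - _)]addrC subrK.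
Qed.

Lemma sum_bary y k : \sum_i bary y k i = k.
Proof.
rewrite big_ord_recl /bary unlift_none.
under [X in _ + X]eq_bigr => j _ do rewrite liftK.
by rewrite subrK.
Qed.

Hypothesis edge_unit : edge_mx \in unitmx.

Lemma bary_comb y k : \sum_i bary y k i *: vert i = y.
Proof.
rewrite sum_scale_vert sum_bary.
have -> : \row_j bary y k (lift ord0 j) = edge_coord y k.
  by apply/rowP => j; rewrite mxE /bary liftK.
by rewrite mulmxKV // addrC subrK.
Qed.

Lemma bary_uniq y k (lam : 'I_d.+1 -> rat) :
  \sum_i lam i = k -> \sum_i lam i *: vert i = y -> forall i, lam i = bary y k i.
Proof.
move=> lam_sum lam_y.
have lam_lift j : lam (lift ord0 j) = edge_coord y k 0 j.
  by rewrite /edge_coord -lam_y sum_scale_vert lam_sum addrC addKr mulmxK // mxE.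
move=> i; rewrite /bary; case: unliftP => [j ->|->] //.
by rewrite -(eq_bigr _ (fun j _ => lam_lift j)) -lam_sum big_ord_recl addrK.
Qed.

Lemma in_kP_bary k y : in_kP v k y <-> forall i, 0 <= bary (intvec y) k%:R i.
Proof.
split.
  by case=> lam [lam_ge0 [lam_sum lam_y]] i; rewrite -(bary_uniq lam_sum (esym lam_y)).
by move=> h; exists (bary (intvec y) k%:R); rewrite sum_bary bary_comb.
Qed.

Definition vsum (S : {set 'I_d.+1}) : 'rV[int]_d := \sum_(s in S) v s.

Lemma bary_add_vsum (S : {set 'I_d.+1}) y k i :
  bary (intvec (y + vsum S)) (k + #|S|)%:R i = bary (intvec y) k%:R i + (i \in S)%:R.
Proof.
symmetry; apply: (bary_uniq (lam := fun j => bary (intvec y) k%:R j + (j \in S)%:R)).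
  rewrite big_split sum_bary natrD -sum1_card natr_sum /= [in RHS]big_mkcond.
  by congr (_ + _); apply: eq_bigr => j _; case: (j \in S).
under eq_bigr => j _ do rewrite scalerDl.
rewrite big_split bary_comb /intvec map_mxD map_mx_sum [in RHS]big_mkcond.
by congr (_ + _); apply: eq_bigr => j _; case: (j \in S); rewrite ?scale1r ?scale0r.
Qed.

Lemma bary_add_vert y k i j :
  bary (intvec (y + v i)) k.+1%:R j = bary (intvec y) k%:R j + (j == i)%:R.
Proof.
have := bary_add_vsum [set i] y k j.
by rewrite /vsum big_set1 cards1 addn1 inE.
Qed.

Definition big_coords k (p : 'rV[int]_d) : {set 'I_d.+1} :=
  [set i | 1 <= bary (intvec p) k%:R i].

Lemma card_big_coords k p : in_kP v k p -> (#|big_coords k p| <= k)%N.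
Proof.
move/in_kP_bary=> p_ge0.
rewrite -(ler_nat rat) -sum1_card natr_sum -[X in _ <= X](sum_bary (intvec p) k%:R).
rewrite [X in _ <= X](bigID (mem (big_coords k p))) /= -[X in X <= _]addr0.
by apply: lerD; [apply: ler_sum => i; rewrite inE | apply: sumr_ge0].
Qed.

Lemma count_big_coords k (S : {set 'I_d.+1}) : (#|S| <= k)%N ->
  ehrhart v (k - #|S|) = count (fun p => S \subset big_coords k p) (lattice_pts v k).
Proof.
move=> Sk; rewrite -size_lattice_pts -size_filter -(size_map (+%R^~ (vsum S))).
have baryE y i : bary (intvec (y + vsum S)) k%:R i
                 = bary (intvec y) (k - #|S|)%:R i + (i \in S)%:R.
  by rewrite -bary_add_vsum subnK.
apply/perm_size/uniq_perm => [||z].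
- by rewrite map_inj_uniq ?uniq_lattice_pts //; apply: addIr.
- by rewrite filter_uniq ?uniq_lattice_pts.
apply/mapP/idP => [[y /mem_lattice_pts/in_kP_bary y_ge0 ->]|].
  rewrite mem_filter; apply/andP; split.
    by apply/subsetP => i iS; rewrite inE baryE iS lerDr.
  by apply/mem_lattice_pts/in_kP_bary => i; rewrite baryE addr_ge0.
rewrite mem_filter => /andP [/subsetP S_big /mem_lattice_pts/in_kP_bary z_ge0].
exists (z - vsum S); last by rewrite subrK.
apply/mem_lattice_pts/in_kP_bary => i; have := baryE (z - vsum S) i.
rewrite subrK => /(canLR (addrK _)) <-.
case: (boolP (i \in S)) => iS; last by rewrite subr0.
by rewrite subr_ge0; have := S_big i iS; rewrite inE.
Qed.

Lemma hstar_coef_box k :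
  hstar_coef v k = (count (fun p => big_coords k p == set0) (lattice_pts v k))%:Z.
Proof.
rewrite /hstar_coef (sum_binomial_subsets _ _ (fun i => (ehrhart v (k - i))%:Z)).
under eq_bigr => S Sk do
  rewrite (count_big_coords Sk) -sumn_count sumnE big_map -natz natr_sum mulr_sumr.
rewrite exchange_big /= -sumn_count sumnE big_map -natz natr_sum big_seq [RHS]big_seq.
apply: eq_bigr => p /mem_lattice_pts pkP.
rewrite -sum_subset_sign big_mkcond [RHS]big_mkcond /=; apply: eq_bigr => S _.
case: (boolP (S \subset big_coords k p)) => S_big; last by case: ifP; rewrite ?mulr0.
by rewrite (leq_trans (subset_leq_card S_big) (card_big_coords pkP)) mulr1.
Qed.

Definition box_point k p := in_kP v k p /\ big_coords k p = set0.

Lemma big_coords_eq0 k p :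
  big_coords k p = set0 <-> forall i, bary (intvec p) k%:R i < 1.
Proof.
split => [e i | lt1]; last by apply/setP => i; rewrite !inE leNgt lt1.
by have := in_set0 i; rewrite -e inE ltNge => ->.
Qed.

Lemma box_point_height k p : box_point k p -> (k <= d)%N.
Proof.
case=> _ /big_coords_eq0 lt1.
rewrite -ltnS -(ltr_nat rat) -(sum_bary (intvec p) k%:R).
rewrite -[X in _ < X%:R](card_ord d.+1) -sum1_card natr_sum.
by apply: ltr_sum => //; apply/hasP; exists ord0; rewrite ?mem_index_enum.
Qed.

Lemma box_point0 : box_point 0 0.
Proof.
have bary0 i : bary (intvec 0) 0%:R i = 0.
  symmetry; apply: (bary_uniq (lam := fun=> 0)); first by rewrite big1.
  by rewrite /intvec map_mx0 big1 // => j _; rewrite scale0r.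
by split; [apply/in_kP_bary | apply/big_coords_eq0] => i; rewrite bary0.
Qed.

Lemma box_height_le_deg k p : box_point k p -> (k <= ehrhart_deg v)%N.
Proof.
move=> p_box; have kd := box_point_height p_box; case: p_box => pkP p_big.
have coef_k : (hstar v)`_k != 0.
  rewrite coef_poly ltnS kd hstar_coef_box -lt0n -has_count.
  by apply/hasP; exists p; [apply/mem_lattice_pts | apply/eqP].
rewrite /ehrhart_deg; case: (ltnP k (size (hstar v))) => [|size_le]; first lia.
by move: coef_k; rewrite nth_default ?eqxx.
Qed.

Lemma gen_from_box_free n :
  (forall k p, box_point k p -> (k <= n)%N) -> gen_from v n.
Proof.
move=> box_le k nk y; split; last first.
  case=> i [x [/in_kP_bary x_ge0 ->]]; apply/in_kP_bary => j.
  by rewrite addrC bary_add_vert addr_ge0.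
move=> ykP; have [big0|[i i_big]] := set_0Vmem (big_coords k.+1 y).
  by have := box_le _ _ (conj ykP big0); lia.
exists i, (y - v i); split; last by rewrite addrC subrK.
apply/in_kP_bary => j; have := bary_add_vert (y - v i) k i j.
rewrite subrK => /(canLR (addrK _)) <-.
case: eqP => [->|_]; last by rewrite subr0 (proj1 (in_kP_bary _ _) ykP).
by rewrite subr_ge0; move: i_big; rewrite inE.
Qed.

Lemma exists_max_box_height :
  exists2 H, (exists p, box_point H p) & forall k p, box_point k p -> (k <= H)%N.
Proof.
have exP : exists k, decide (exists p, box_point k p).
  by exists 0%N; apply/decideP; exists 0; apply: box_point0.
have boundP k : decide (exists p, box_point k p) -> (k <= d)%N.
  by move=> /decideP [p /box_point_height].
have [H /decideP H_box H_max] := ex_maxnP exP boundP.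
by exists H => // k p kp; apply: H_max; apply/decideP; exists p.
Qed.

Lemma bary0_int (z : 'rV[int]_d) i :
  (forall k p, box_point k p -> k = 0%N) -> bary (intvec z) 0%:R i \is a Num.int.
Proof.
move=> box0; set m := bary (intvec z) 0%:R.
(* the fractional parts of the coordinates of z are the coordinates of a box point *)
pose fl j := Num.floor (m j); pose f j := m j - (fl j)%:~R.
have f_ge0 j : 0 <= f j by rewrite subr_ge0 floor_le.
have f_lt1 j : f j < 1.
  by rewrite ltrBlDr -[1]/(1%:~R) -intrD -floor_lt_int addrC ltzD1.
pose z' := z - \sum_j fl j *: v j.
have f_comb : \sum_j f j *: vert j = intvec z'.
  under eq_bigr => j _ do rewrite scalerBl.
  rewrite sumrB bary_comb /z' /intvec map_mxB map_mx_sum; congr (_ - _).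
  by apply: eq_bigr => j _; apply/rowP => l; rewrite !mxE; exact: esym (intrM _ _ _).
have f_sum : \sum_j f j = (- \sum_j fl j)%:~R.
  by rewrite sumrB sum_bary rmorphN rmorph_sum sub0r.
have [n fl_sum] : exists n : nat, - \sum_j fl j = n%:Z.
  exists `|- \sum_j fl j|%N; rewrite gez0_abs // -(ler0z rat) -f_sum.
  exact: sumr_ge0.
rewrite fl_sum in f_sum.
have f_bary j : f j = bary (intvec z') n%:R j := bary_uniq f_sum f_comb j.
have n0 : n = 0%N.
  by apply: (box0 _ z'); split; [apply/in_kP_bary | apply/big_coords_eq0] => j;
    rewrite -f_bary.
rewrite n0 in f_sum; have /eqP := psumr_eq0P (fun j _ => f_ge0 j) f_sum (i := i) isT.
by rewrite subr_eq0 intrEfloor eq_sym.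
Qed.

Lemma int_inv_edge_mx : (forall k p, box_point k p -> k = 0%N) ->
  exists C : 'M[int]_d, map_mx intr C = invmx edge_mx.
Proof.
move=> box0; exists (map_mx Num.floor (invmx edge_mx)).
apply/matrixP => j l; rewrite !mxE floorK //.
have -> : invmx edge_mx j l = bary (intvec 'e_j) 0%:R (lift ord0 l).
  by rewrite /bary liftK /edge_coord scale0r subr0 /intvec map_delta_mx -rowE mxE.
exact: bary0_int.
Qed.

Lemma edge_coord_vert i : (vert i - vert ord0) *m invmx edge_mx = std_vert i.
Proof.
case: (unliftP ord0 i) => [j ->|->]; last first.
  by rewrite subrr mul0mx; apply/rowP => l; rewrite !mxE.
have -> : vert (lift ord0 j) - vert ord0 = row j edge_mx by apply/rowP => l; rewrite !mxE.
rewrite -row_mul mulmxV // row1; apply/rowP => l; rewrite !mxE lift0 eqSS.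
by rewrite eqxx /= -val_eqE /= eq_sym; case: eqP.
Qed.

Lemma unimod_of_int_inv (C : 'M[int]_d) : map_mx intr C = invmx edge_mx ->
  unimod_equiv (simplexP v) (@std_simplex d).
Proof.
move=> CE; pose t : 'rV[int]_d := - (v ord0 *m C).
have affE x : aff_map C t x = (x - vert ord0) *m invmx edge_mx.
  by rewrite /aff_map /t /intvec map_mxN map_mxM CE mulmxBl.
have aff_comb (lam : 'I_d.+1 -> rat) : \sum_i lam i = 1 ->
    aff_map C t (\sum_i lam i *: vert i) = \sum_i lam i *: std_vert i.
  move=> lam1; rewrite affE.
  have -> : \sum_i lam i *: vert i - vert ord0 = \sum_i lam i *: (vert i - vert ord0).
    by rewrite (eq_bigr _ (fun i _ => scalerBr _ _ _)) sumrB -scaler_suml lam1 scale1r.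
  by rewrite mulmx_suml; apply: eq_bigr => i _; rewrite -scalemxAl edge_coord_vert.
have C_unit : C \in unitmx.
  pose A := \matrix_(i < d, j < d) (v (lift ord0 i) 0 j - v ord0 0 j).
  suff CA : C *m A = 1%:M by case: (mulmx1_unit CA).
  have /matrixP CA : map_mx intr (C *m A) = map_mx intr 1%:M :> 'M[rat]_d.
    by rewrite map_mxM map_mx1 CE -edge_mxE mulVmx.
  by apply/matrixP => i j; apply: (@intr_inj rat); have := CA i j; rewrite !mxE.
exists C, t; split => // y; split.
  case=> lam [lam_ge0 [lam1 ->]]; exists (\sum_i lam i *: vert i).
  by split; [exists lam | rewrite aff_comb].
case=> _ [[lam [lam_ge0 [lam1 ->]]] ->].
by exists lam; rewrite aff_comb.
Qed.

End BarycentricCoordinates.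

Theorem mainTheorem3 (d : nat) (v : 'I_d.+1 -> 'rV[int]_d) :
  full_dim_simplex v ->
  ~ unimod_equiv (simplexP v) (@std_simplex d) ->
  exists n : nat, is_nu v n /\ (n <= ehrhart_deg v)%N.
Proof.
move=> full not_std; have edge_unit := edge_mx_unit full.
have [H [p Hp] H_max] := exists_max_box_height edge_unit.
have [H0|H_gt0] := posnP H.
  have [C CE] : exists C, map_mx intr C = invmx (edge_mx v).
    by apply: int_inv_edge_mx edge_unit _ => k q /H_max; rewrite H0; lia.
  by case: not_std; apply: unimod_of_int_inv CE.
have [n [nu_n n_le]] := is_nu_le H_gt0 (gen_from_box_free edge_unit H_max).
by exists n; split; last by apply: leq_trans n_le (box_height_le_deg edge_unit Hp).
Qed.
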